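(* Let $l,n$ be positive integers, $\mathbf{x}_1,\dots,\mathbf{x}_l\in\mathbb{R}^n$, $y_1,\dots,y_l\in\mathbb{R}$, $a_1,\dots,a_l,b_1,\dots,b_l\in\mathbb{R}$. Let $\varphi:\mathbb{R}\to[0,\infty)$ be nonconstant, continuous and sublinear, with $\varphi^*=\iota_{[\alpha,\beta]}$, $\alpha<\beta$. Let $\mathbf Z\in\mathbb{R}^{l\times n}$ have $i$-th row $a_i\mathbf x_i^T$, $\bar{\mathbf y}=(b_1y_1,\dots,b_ly_l)^T$, and for $C>0$ let $\theta^*(C)$ denote an optimal solution of $$\min_{\theta\in[\alpha,\beta]^l}\ \tfrac{C}{2}\|\mathbf Z^T\theta\|^2-\langle\bar{\mathbf y},\theta\rangle.$$ Let $0<C_1<C_2<\dots<C_{\mathcal K}$ and suppose $\theta^*(C_k)$ is known for some integer $1\le k<\mathcal K$. If $$\tfrac{C_{k+1}+C_k}{2}\langle\mathbf Z^T\theta^*(C_k),a_i\mathbf x_i\rangle-\tfrac{C_{k+1}-C_k}{2}\|\mathbf Z^T\theta^*(C_k)\|\,\|a_i\mathbf x_i\|>b_iy_i,$$ then $[\theta^*(C_{k+1})]_i=\alpha$, i.e., $i\in\mathcal R$ (at $C=C_{k+1}$). Similarly, if $$\tfrac{C_{k+1}+C_k}{2}\langle\mathbf Z^T\theta^*(C_k),a_i\mathbf x_i\rangle+\tfrac{C_{k+1}-C_k}{2}\|\mathbf Z^T\theta^*(C_k)\|\,\|a_i\mathbf x_i\|<b_iy_i,$$ then $[\theta^*(C_{k+1})]_i=\beta$,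 i.e., $i\in\mathcal L$.
   Context: This dual corresponds to the primal problem $\min_{\mathbf w\in\mathbb{R}^n}\frac12\|\mathbf w\|^2+C\sum_{i=1}^l\varphi(\mathbf w^T(a_i\mathbf x_i)+b_iy_i)$ with unique solution $\mathbf w^*(C)=-C\mathbf Z^T\theta^*(C)$. Sublinear means convex and positively homogeneous; $\varphi^*(s)=\sup_t(st-\varphi(t))$; $\iota_{[\alpha,\beta]}$ is $0$ on $[\alpha,\beta]$, $+\infty$ elsewhere. At parameter $C$: $\mathcal R=\{i:-\langle\mathbf w^*(C),a_i\mathbf x_i\rangle>b_iy_i\}$, $\mathcal L=\{i:-\langle\mathbf w^*(C),a_i\mathbf x_i\rangle<b_iy_i\}$. *)

From HB Require Import structures.
From mathcomp Require Import all_boot all_order all_algebra.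
From mathcomp Require Import all_classical all_reals all_analysis.
Set Implicit Arguments. Unset Strict Implicit. Unset Printing Implicit Defensive.
Import Order.TTheory GRing.Theory Num.Theory.
Import numFieldNormedType.Exports.
Local Open Scope classical_set_scope.
Local Open Scope ring_scope.

Definition dotv (R : realType) (n : nat) (u v : 'cV[R]_n) : R :=
  \sum_(j < n) u j 0 * v j 0.
Definition normv (R : realType) (n : nat) (u : 'cV[R]_n) : R :=
  Num.sqrt (dotv u u).

Definition convex_fun (R : realType) (f : R -> R) : Prop :=
  forall (s t lam : R), 0 <= lam -> lam <= 1 ->
    f (lam * s + (1 - lam) * t) <= lam * f s + (1 - lam) * f t.
Definition pos_homogeneous (R : realType) (f : R -> R) : Prop :=
  forall (lam t : R), 0 < lam -> f (lam * t) = lam * f t.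
Definition sublinear (R : realType) (f : R -> R) : Prop :=
  convex_fun f /\ pos_homogeneous f.

Definition fconj (R : realType) (f : R -> R) (s : R) : \bar R :=
  ereal_sup [set ((s * t - f t)%:E) | t in [set: R]].
Definition iota_int (R : realType) (alpha beta : R) (s : R) : \bar R :=
  if (alpha <= s) && (s <= beta) then 0%E else (+oo)%E.

Definition Zmat (R : realType) (l n : nat) (a : 'I_l -> R) (x : 'I_l -> 'cV[R]_n)
  : 'M[R]_(l, n) := \matrix_(i < l, j < n) (a i * x i j 0).
Definition ybar (R : realType) (l : nat) (b y : 'I_l -> R) : 'cV[R]_l :=
  \col_(i < l) (b i * y i).

Definition dual_obj (R : realType) (l n : nat) (Z : 'M[R]_(l, n)) (yb : 'cV[R]_l)
  (C : R) (theta : 'cV[R]_l) : R :=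
  C / 2 * normv (Z^T *m theta) ^+ 2 - dotv yb theta.

Definition box_feasible (R : realType) (l : nat) (alpha beta : R) (theta : 'cV[R]_l)
  : Prop := forall i : 'I_l, alpha <= theta i 0 <= beta.

Definition dual_optimal (R : realType) (l n : nat) (Z : 'M[R]_(l, n)) (yb : 'cV[R]_l)
  (alpha beta C : R) (theta : 'cV[R]_l) : Prop :=
  box_feasible alpha beta theta /\
  forall theta' : 'cV[R]_l, box_feasible alpha beta theta' ->
    dual_obj Z yb C theta <= dual_obj Z yb C theta'.

From HB Require Import structures.
From mathcomp Require Import all_boot all_order all_algebra.
From mathcomp Require Import all_classical all_reals all_analysis.
From mathcomp Require Import ring lra.
Import Order.TTheory GRing.Theory Num.Theory.
Import numFieldNormedType.Exports.
Local Open Scope classical_set_scope.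
Local Open Scope ring_scope.

(* Write u := Z^T theta*(C_k), u' := Z^T theta*(C_{k+1}).  Adding the
   first-order optimality conditions of the two dual problems (each tested
   against the other optimum) shows that C_{k+1} u' lies in the ball of centre
   (C_k + C_{k+1})/2 u and radius (C_{k+1} - C_k)/2 ||u||.  By Cauchy-Schwarz,
   C_{k+1} <u', a_i x_i> is then within (C_{k+1} - C_k)/2 ||u|| ||a_i x_i|| of
   (C_k + C_{k+1})/2 <u, a_i x_i>, so each hypothesis fixes the sign of
   C_{k+1} <u', a_i x_i> - b_i y_i.  Optimality in the single coordinate i then
   forces theta*(C_{k+1})_i to the corresponding end of [alpha, beta]. *)

Section DotProduct.
Context {R : realType} {m : nat}.
Implicit Types (u v w : 'cV[R]_m).

Lemma dotvC u v : dotv u v = dotv v u.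
Proof. by apply: eq_bigr => j _; rewrite mulrC. Qed.

Lemma dotvDl u v w : dotv (u + v) w = dotv u w + dotv v w.
Proof. by rewrite /dotv -big_split; apply: eq_bigr => j _; rewrite mxE mulrDl. Qed.

Lemma dotvZl c u w : dotv (c *: u) w = c * dotv u w.
Proof. by rewrite /dotv mulr_sumr; apply: eq_bigr => j _; rewrite mxE mulrA. Qed.

Lemma dotvNl u w : dotv (- u) w = - dotv u w.
Proof. by rewrite -scaleN1r dotvZl mulN1r. Qed.

Lemma dotvBl u v w : dotv (u - v) w = dotv u w - dotv v w.
Proof. by rewrite dotvDl dotvNl. Qed.

Lemma dotvDr u v w : dotv w (u + v) = dotv w u + dotv w v.
Proof. by rewrite dotvC dotvDl !(dotvC w). Qed.

Lemma dotvZr c u w : dotv w (c *: u) = c * dotv w u.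
Proof. by rewrite dotvC dotvZl dotvC. Qed.

Lemma dotvBr u v w : dotv w (u - v) = dotv w u - dotv w v.
Proof. by rewrite !(dotvC w) dotvBl. Qed.

Lemma dotvv_ge0 u : 0 <= dotv u u.
Proof. by apply: sumr_ge0 => j _; rewrite -expr2 sqr_ge0. Qed.

Lemma normv_ge0 u : 0 <= normv u.
Proof. exact: sqrtr_ge0. Qed.

Lemma normv_sqr u : normv u ^+ 2 = dotv u u.
Proof. by rewrite /normv sqr_sqrtr // dotvv_ge0. Qed.

Lemma dotv_sqr_le u v : dotv u v ^+ 2 <= dotv u u * dotv v v.
Proof.
set A := dotv u u; set B := dotv u v; set D := dotv v v.
have quad s r : 0 <= s ^+ 2 * A - 2 * s * r * B + r ^+ 2 * D.
  have := dotvv_ge0 (s *: u - r *: v).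
  by rewrite !(dotvBl, dotvBr, dotvZl, dotvZr) (dotvC v u) -/A -/B -/D; lra.
have A_ge0 : 0 <= A := dotvv_ge0 u.
have D_ge0 : 0 <= D := dotvv_ge0 v.
(* The choices (D, B), (B, A), (1, B) give D (AD - B^2) >= 0, A (AD - B^2) >= 0
   and -2 B^2 >= 0 when A = D = 0. *)
have := quad D B; have := quad B A; have := quad 1 B.
have [A0|A_neq0] := eqVneq A 0; last first.
  have : 0 < A by rewrite lt0r A_neq0.
  by nra.
have [D0|D_neq0] := eqVneq D 0; last first.
  have : 0 < D by rewrite lt0r D_neq0.
  by nra.
by rewrite A0 D0; nra.
Qed.

Lemma abs_dotv_le u v : `|dotv u v| <= normv u * normv v.
Proof.
rewrite -ler_sqr ?nnegrE ?mulr_ge0 ?normv_ge0 // real_normK ?num_real //.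
by rewrite exprMn !normv_sqr dotv_sqr_le.
Qed.

End DotProduct.

Lemma ge0_of_small_quadratic (R : realType) (G H : R) :
  (forall t, 0 < t -> t <= 1 -> 0 <= t * G + t ^+ 2 * H) -> 0 <= G.
Proof.
move=> small; rewrite leNgt; apply/negP => G_lt0.
have absH_ge0 := normr_ge0 H; have le_H := ler_norm H.
set t := - G / (`|H| - G).
have t_gt0 : 0 < t by apply: divr_gt0; lra.
have t_le1 : t <= 1 by rewrite ler_pdivrMr ?mul1r; lra.
(* t |H| < -G, so G + t H < 0. *)
have tH_lt : t * `|H| < - G.
  rewrite /t mulrAC ltr_pdivrMr; last by lra.
  by rewrite mulrDr mulrN; nra.
by have := small t t_gt0 t_le1; nra.
Qed.

Section DualProblem.
Context {R : realType} {l n : nat} {Z : 'M[R]_(l, n)} {yb : 'cV[R]_l}.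
Context {al be : R}.

Lemma box_feasible_segment {th th' : 'cV[R]_l} {t : R} :
  box_feasible al be th -> box_feasible al be th' -> 0 <= t -> t <= 1 ->
  box_feasible al be (th + t *: (th' - th)).
Proof.
move=> feas feas' t_ge0 t_le1 j.
move: (feas j) (feas' j); rewrite !mxE => /andP[? ?] /andP[? ?].
by apply/andP; split; nra.
Qed.

Lemma dual_optimal_vi {C : R} {th th' : 'cV[R]_l} :
  dual_optimal Z yb al be C th -> box_feasible al be th' ->
  0 <= C * dotv (Z^T *m th) (Z^T *m (th' - th)) - dotv yb (th' - th).
Proof.
move=> [feas opt] feas'; set d := th' - th.
apply: (@ge0_of_small_quadratic _ _ (C / 2 * dotv (Z^T *m d) (Z^T *m d))).
move=> t t_gt0 t_le1.
have := opt _ (box_feasible_segment feas feas' (ltW t_gt0) t_le1).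
rewrite -/d /dual_obj !normv_sqr mulmxDr -scalemxAr.
rewrite !(dotvDl, dotvDr, dotvZl, dotvZr) (dotvC (Z^T *m d)).
by nra.
Qed.

Lemma dual_optimal_coord_vi {C : R} {th : 'cV[R]_l} (i : 'I_l) (c : R) :
  dual_optimal Z yb al be C th -> al <= c <= be ->
  0 <= (c - th i 0) * (C * dotv (Z^T *m th) (Z^T *m delta_mx i 0) - yb i 0).
Proof.
move=> opt c_in.
set th' := th + (c - th i 0) *: delta_mx i 0.
have feas' : box_feasible al be th'.
  move=> j; rewrite !mxE; have [->|/negbTE ji] := eqVneq j i.
    by rewrite !eqxx mulr1 addrC subrK.
  by rewrite /= mulr0 addr0; exact: opt.1.
have := dual_optimal_vi opt feas'.
have -> : th' - th = (c - th i 0) *: delta_mx i 0 by rewrite /th' addrC addKr.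
rewrite -scalemxAr !dotvZr.
have -> : dotv yb (delta_mx i 0) = yb i 0.
  rewrite /dotv (bigD1 i) //= big1 => [|j /negbTE ji]; last by rewrite !mxE ji mulr0.
  by rewrite !mxE !eqxx mulr1 addr0.
by rewrite mulrA (mulrC C) -mulrA -mulrBr.
Qed.

Lemma dual_optimal_coord_lower {C : R} {th : 'cV[R]_l} {i : 'I_l} :
  dual_optimal Z yb al be C th ->
  yb i 0 < C * dotv (Z^T *m th) (Z^T *m delta_mx i 0) -> th i 0 = al.
Proof.
move=> opt grad_gt0; have /andP[lo hi] := opt.1 i.
have := dual_optimal_coord_vi i al opt; rewrite lexx (le_trans lo hi).
by move=> /(_ isT) vi; apply/eqP; rewrite eq_le lo andbT; nra.
Qed.

Lemma dual_optimal_coord_upper {C : R} {th : 'cV[R]_l} {i : 'I_l} :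
  dual_optimal Z yb al be C th ->
  C * dotv (Z^T *m th) (Z^T *m delta_mx i 0) < yb i 0 -> th i 0 = be.
Proof.
move=> opt grad_lt0; have /andP[lo hi] := opt.1 i.
have := dual_optimal_coord_vi i be opt; rewrite lexx (le_trans lo hi).
by move=> /(_ isT) vi; apply/eqP; rewrite eq_le hi /=; nra.
Qed.

Lemma dual_optimal_ball {C1 C2 : R} {th1 th2 : 'cV[R]_l} :
  0 <= C2 -> C1 <= C2 ->
  dual_optimal Z yb al be C1 th1 -> dual_optimal Z yb al be C2 th2 ->
  normv (C2 *: (Z^T *m th2) - ((C1 + C2) / 2) *: (Z^T *m th1))
    <= (C2 - C1) / 2 * normv (Z^T *m th1).
Proof.
move=> C2_ge0 C12 opt1 opt2.
have vi1 := dual_optimal_vi opt1 opt2.1.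
have vi2 := dual_optimal_vi opt2 opt1.1.
rewrite -ler_sqr ?nnegrE ?mulr_ge0 ?normv_ge0 //; last by lra.
rewrite exprMn !normv_sqr.
move: vi1 vi2; rewrite !mulmxBr !(dotvBl, dotvBr, dotvZl, dotvZr).
rewrite (dotvC (Z^T *m th1) (Z^T *m th2)).
set A := dotv (Z^T *m th1) _; set B := dotv (Z^T *m th2) _.
set D := dotv (Z^T *m th2) (Z^T *m th2).
have A_ge0 : 0 <= A := dotvv_ge0 _.
(* Summing the two inequalities gives 0 <= C1 (B - A) + C2 (B - D); the claim
   is this sum scaled by C2. *)
move=> vi1 vi2; have sum_ge0 : 0 <= C1 * (B - A) + C2 * (B - D) by lra.
by have := mulr_ge0 C2_ge0 sum_ge0; nra.
Qed.

Lemma dual_optimal_screening {C1 C2 : R} {th1 th2 : 'cV[R]_l} (z : 'cV[R]_n) :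
  0 <= C2 -> C1 <= C2 ->
  dual_optimal Z yb al be C1 th1 -> dual_optimal Z yb al be C2 th2 ->
  `|C2 * dotv (Z^T *m th2) z - (C1 + C2) / 2 * dotv (Z^T *m th1) z|
    <= (C2 - C1) / 2 * normv (Z^T *m th1) * normv z.
Proof.
move=> C2_ge0 C12 opt1 opt2.
rewrite -!dotvZl -dotvBl; apply: le_trans (abs_dotv_le _ _) _.
by apply: ler_wpM2r; [exact: normv_ge0 | exact: dual_optimal_ball].
Qed.

End DualProblem.

Lemma Zmat_tr_delta {R : realType} {l n : nat} (a : 'I_l -> R)
    (x : 'I_l -> 'cV[R]_n) (i : 'I_l) :
  (Zmat a x)^T *m delta_mx i 0 = a i *: x i.
Proof.
apply/matrixP => j k; rewrite !mxE (bigD1 i) //= big1 => [|m /negbTE mi].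
  by rewrite !mxE eqxx (ord1 k) /= mulr1 addr0.
by rewrite !mxE mi mulr0.
Qed.

Lemma increasing_from_pos_gt0 {R : realType} {K : nat} {C : nat -> R} :
  0 < C 1%N -> (forall j, (1 <= j)%N -> (j < K)%N -> C j < C j.+1) ->
  forall j, (1 <= j)%N -> (j <= K)%N -> 0 < C j.
Proof.
move=> C1_gt0 C_incr; elim=> [//|[//|j] IH] _ jK.
by apply: lt_trans (C_incr j.+1 _ jK); [exact: IH (ltnW jK) | ].
Qed.

(* The hypotheses on phi only identify the dual problem with the displayed
   one. *)
Theorem corollary1 (R : realType) (l n : nat) (x : 'I_l -> 'cV[R]_n)
  (y a b : 'I_l -> R) (phi : R -> R) (alpha beta : R)
  (K : nat) (C : nat -> R) (k : nat)
  (theta_k theta_k1 : 'cV[R]_l) :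
  (0 < l)%N -> (0 < n)%N ->
  (forall t, 0 <= phi t) ->
  (exists t1 t2, phi t1 <> phi t2) ->
  continuous phi ->
  sublinear phi ->
  (forall s, fconj phi s = iota_int alpha beta s) ->
  alpha < beta ->
  0 < C 1%N ->
  (forall j, (1 <= j)%N -> (j < K)%N -> C j < C j.+1) ->
  (1 <= k)%N -> (k < K)%N ->
  dual_optimal (Zmat a x) (ybar b y) alpha beta (C k) theta_k ->
  dual_optimal (Zmat a x) (ybar b y) alpha beta (C k.+1) theta_k1 ->
  let Z := Zmat a x in
  let v := Z^T *m theta_k in
  let w := - (C k.+1 *: (Z^T *m theta_k1)) in
  forall i : 'I_l,
    ((C k.+1 + C k) / 2 * dotv v (a i *: x i)
       - (C k.+1 - C k) / 2 * normv v * normv (a i *: x i) > b i * y i ->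
     theta_k1 i 0 = alpha /\ - dotv w (a i *: x i) > b i * y i)
    /\
    ((C k.+1 + C k) / 2 * dotv v (a i *: x i)
       + (C k.+1 - C k) / 2 * normv v * normv (a i *: x i) < b i * y i ->
     theta_k1 i 0 = beta /\ - dotv w (a i *: x i) < b i * y i).
Proof.
move=> _ _ _ _ _ _ _ _ C1_gt0 C_incr k_ge1 kK opt opt1 Z v w i.
have Ck_gt0 := increasing_from_pos_gt0 C1_gt0 C_incr k k_ge1 (ltnW kK).
have Ck_lt := C_incr k k_ge1 kK.
have ybar_i : ybar b y i 0 = b i * y i by rewrite mxE.
have w_i : - dotv w (a i *: x i) = C k.+1 * dotv (Z^T *m theta_k1) (a i *: x i).
  by rewrite /w dotvNl dotvZl opprK.
have := dual_optimal_screening (a i *: x i) (ltW (lt_trans Ck_gt0 Ck_lt))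
  (ltW Ck_lt) opt opt1.
rewrite -/Z -/v ler_norml => /andP[screen_lo screen_hi].
rewrite (addrC (C k)) in screen_lo screen_hi; rewrite w_i; set z := a i *: x i in screen_lo screen_hi *.
set g := C k.+1 * _ in screen_lo screen_hi *.
split=> hyp.
  have by_lt_g : b i * y i < g by lra.
  split=> //; apply: dual_optimal_coord_lower opt1 _.
  by rewrite ybar_i Zmat_tr_delta.
have g_lt_by : g < b i * y i by lra.
split=> //; apply: dual_optimal_coord_upper opt1 _.
by rewrite ybar_i Zmat_tr_delta.
Qed.
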